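(* Consider the linear regression model $y=Ug+v$ with $y\in\mathbb{R}^N$ observed, $U\in\mathbb{R}^{N\times n}$ known, $g\in\mathbb{R}^n$ unknown. Let $p>0$ be an integer such that $m:=N/p$ is an integer. Let the hyperparameter vector be $\theta=(\lambda,\beta,\Upsilon_1,\dots,\Upsilon_p)$, with the model: given $\theta$, $g\sim\mathcal N(0,\lambda K_\beta)$ with $\{K_\beta\}_{i,j}=\beta^{\max(i,j)}$; given $\theta$, $v\sim\mathcal N(0,\Sigma_v)$ independent of $g$, where $\Sigma_v=\mathrm{diag}\{\tau_1,\dots,\tau_N\}$ with $\tau_{(i-1)m+1}=\dots=\tau_{im}=\Upsilon_i$ for $i=1,\dots,p$; prior $p(\theta)=p(\lambda)p(\beta)\prod_{i=1}^p p(\Upsilon_i)$, with $p(\lambda)\propto\chi_{\mathbb{R}^+}(\lambda)$, $p(\beta)=\chi_{[0,1)}(\beta)$, and the $\Upsilon_i$ i.i.d. with either (Laplacian case) $p(\Upsilon)=\frac1{\sigma^2}e^{-\Upsilon/\sigma^2}$, $\Upsilon\ge0$, or (Student's t case, $\nu>2$) $p(\Upsilon)=\frac{((\nu-2)\sigma^2/2)^{\nu/2}}{\Gamma(\nu/2)}\Upsilon^{-\nu/2-1}e^{-(\nu-2)\sigma^2/(2\Upsilon)}$, $\Upsilon\ge0$, with $\sigma^2>0$ given. For $\theta$, let $P=(U^T\Sigma_v^{-1}U+(\lambda K_\beta)^{-1})^{-1}$ and $C=PU^T\Sigma_v^{-1}$. Consider the EM method for maximizing $\log(p(y\mid\theta)p(\theta))$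 with latent variable $g$: given $\hat\theta^{(k)}$, $\hat\theta^{(k+1)}=\arg\max_\theta\mathbb{E}_{p(g\mid y,\hat\theta^{(k)})}\big[\log p(y,g\mid\theta)+\sum_{i=1}^p\log p(\Upsilon_i)\big]$. Let $\hat C^{(k)},\hat P^{(k)}$ be $C,P$ evaluated at $\hat\theta^{(k)}$, $\hat y^{(k)}=U\hat C^{(k)}y$, $\hat S^{(k)}=U\hat P^{(k)}U^T$. Partition $\hat S^{(k)}$ into $m\times m$ blocks $\hat S^{(k)}_{ij}$, $i,j=1,\dots,p$, and $y$, $\hat y^{(k)}$ into consecutive blocks $Y_i,\hat Y_i^{(k)}\in\mathbb{R}^m$, $i=1,\dots,p$. Define $\hat\zeta_i^{(k)}=\|Y_i-\hat Y_i^{(k)}\|^2+\mathrm{Tr}\{\hat S^{(k)}_{ii}\}$. Then the updates $\hat\Upsilon_i^{(k+1)}$, $i=1,\dots,p$, are: in the Laplacian case $\hat\Upsilon_i^{(k+1)}=\frac{m\sigma^2}{4}\Big(\sqrt{1+\frac{8\hat\zeta_i^{(k)}}{m^2\sigma^2}}-1\Big)$; in the Student's t case $\hat\Upsilon_i^{(k+1)}=\frac{\hat\zeta_i^{(k)}+(\nu-2)\sigma^2}{\nu+2+m}$.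
   Context: $\chi_{\mathcal S}$ denotes the indicator function of the set $\mathcal S$. $\mathrm{Tr}$ denotes the trace and $\|\cdot\|$ the Euclidean norm. *)

From HB Require Import structures.
From mathcomp Require Import all_boot all_order all_algebra.
From mathcomp Require Import all_classical all_reals all_analysis.
Set Implicit Arguments. Unset Strict Implicit. Unset Printing Implicit Defensive.
Import Order.TTheory GRing.Theory Num.Theory.
Import numFieldNormedType.Exports.
Local Open Scope classical_set_scope.
Local Open Scope ring_scope.

Section Defs.
Variable R : realType.

Definition Gamma (s : R) : R :=
  fine (\int[@lebesgue_measure R]_(x in `]0%R, +oo[)
          (powR x (s - 1) * expR (- x))%:E)%E.

Definition prior_lap (sigma2 Ups : R) : R := sigma2^-1 * expR (- (Ups / sigma2)).

Definition prior_t (nu sigma2 Ups : R) : R :=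
  powR ((nu - 2) * sigma2 / 2) (nu / 2) / Gamma (nu / 2)
  * powR Ups (- (nu / 2) - 1) * expR (- ((nu - 2) * sigma2 / (2 * Ups))).

Lemma blk_idx_proof (p m : nat) (i : 'I_p) (j : 'I_m) : (i * m + j < p * m)%N.
Proof.
case: i => i /= Hi; case: j => j /= Hj.
have: (i * m + m <= p * m)%N by rewrite -mulSnr leq_mul2r Hi orbT.
by apply: leq_trans; rewrite ltn_add2l.
Qed.
Definition blk_idx (p m : nat) (i : 'I_p) (j : 'I_m) : 'I_(p * m) :=
  Ordinal (blk_idx_proof i j).

Lemma blk_of_proof (p m : nat) (k : 'I_(p * m)) : (k %/ m < p)%N.
Proof.
case: k => k /= Hk; case: m Hk => [|m] Hk; first by rewrite muln0 in Hk.
by rewrite ltn_divLR.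
Qed.
Definition blk_of (p m : nat) (k : 'I_(p * m)) : 'I_p := Ordinal (blk_of_proof k).

(* K_beta, with {K}_{i,j} = beta^{max(i,j)} for 1-based i,j *)
Definition Kbeta (n : nat) (beta : R) : 'M[R]_n :=
  \matrix_(i < n, j < n) beta ^+ (maxn i j).+1.

Definition Sigmav (p m : nat) (Ups : 'I_p -> R) : 'M[R]_(p * m) :=
  diag_mx (\row_(k < p * m) Ups (blk_of k)).

Definition gauss_pdf (d : nat) (S : 'M[R]_d) (x : 'cV[R]_d) : R :=
  powR (2 * pi) (- (d%:R / 2)) * powR (\det S) (- (1 / 2))
  * expR (- (1 / 2) * (x^T *m invmx S *m x) 0 0).

Definition joint_pdf (p m n : nat) (U : 'M[R]_(p * m, n)) (y : 'cV[R]_(p * m))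
    (lam beta : R) (Ups : 'I_p -> R) (g : 'cV[R]_n) : R :=
  gauss_pdf (Sigmav m Ups) (y - U *m g) * gauss_pdf (lam *: Kbeta n beta) g.

Definition Pmat (p m n : nat) (U : 'M[R]_(p * m, n)) (lam beta : R)
    (Ups : 'I_p -> R) : 'M[R]_n :=
  invmx (U^T *m invmx (Sigmav m Ups) *m U + invmx (lam *: Kbeta n beta)).
Definition Cmat (p m n : nat) (U : 'M[R]_(p * m, n)) (lam beta : R)
    (Ups : 'I_p -> R) : 'M[R]_(n, p * m) :=
  Pmat U lam beta Ups *m U^T *m invmx (Sigmav m Ups).

Definition zeta (p m n : nat) (U : 'M[R]_(p * m, n)) (y : 'cV[R]_(p * m))
    (lam beta : R) (Ups : 'I_p -> R) (i : 'I_p) : R :=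
  let yhat := U *m Cmat U lam beta Ups *m y in
  let S := U *m Pmat U lam beta Ups *m U^T in
  \sum_(j < m) (y (blk_idx i j) 0 - yhat (blk_idx i j) 0) ^+ 2
  + \sum_(j < m) S (blk_idx i j) (blk_idx i j).

Definition admissible (p : nat) (lam beta : R) (Ups : 'I_p -> R) : Prop :=
  0 < lam /\ 0 < beta < 1 /\ (forall i, 0 < Ups i).

(* EM objective: E_{g ~ posterior}[ log p(y,g|theta) + sum_i log p(Ups_i) ],
   the posterior being represented by the law of the random vector g under P *)
Definition EMobj (d : measure_display) (T : measurableType d)
    (P : probability T R) (p m n : nat) (U : 'M[R]_(p * m, n))
    (y : 'cV[R]_(p * m)) (g : T -> 'cV[R]_n) (prior : R -> R)
    (lam beta : R) (Ups : 'I_p -> R) : \bar R :=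
  (\int[P]_w (ln (joint_pdf U y lam beta Ups (g w))
               + \sum_(i < p) ln (prior (Ups i)))%:E)%E.

(* g is a random vector with mean mu and covariance Sig under P
   (second-order description of the posterior N(mu, Sig)) *)
Definition rv_mean_cov (d : measure_display) (T : measurableType d)
    (P : probability T R) (n : nat) (g : T -> 'cV[R]_n)
    (mu : 'cV[R]_n) (Sig : 'M[R]_n) : Prop :=
  (forall i, measurable_fun setT (fun w => g w i 0)) /\
  (forall i, P.-integrable setT (fun w => ((g w i 0) ^+ 2)%:E)) /\
  (forall i, (\int[P]_w (g w i 0)%:E = (mu i 0)%:E)%E) /\
  (forall i j, (\int[P]_w ((g w i 0 - mu i 0) * (g w j 0 - mu j 0))%:E
                 = (Sig i j)%:E)%E).

Definition is_argmax (p : nat) (Q : R -> R -> ('I_p -> R) -> \bar R)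
    (lam beta : R) (Ups : 'I_p -> R) : Prop :=
  admissible lam beta Ups /\
  forall lam' beta' Ups', admissible lam' beta' Ups' ->
    (Q lam' beta' Ups' <= Q lam beta Ups)%E.

End Defs.

From HB Require Import structures.
From mathcomp Require Import all_boot all_order all_algebra.
From mathcomp Require Import all_classical all_reals all_analysis.
From mathcomp Require Import measurable_realfun exponential_distribution.
From mathcomp Require Import ring lra zify.
Set Implicit Arguments. Unset Strict Implicit. Unset Printing Implicit Defensive.
Import Order.TTheory GRing.Theory Num.Theory.
Local Open Scope ring_scope.

(* After taking logarithms, the EM objective is a term depending only on
   (lambda, beta) plus, for each block i,
     ln p(Ups_i) - (m ln Ups_i + E ||Y_i - (U g)_i||^2 / Ups_i) / 2,
   so a maximiser maximises each of these separately in Ups_i.  As g has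
   posterior mean C y and covariance P, the expected block residual is zeta_i.
   Both priors have log-densities K - alpha ln v - gamma / v - c v
   (generalized inverse Gaussian type), and concavity of ln shows that
   -A ln v - B / v - c v is maximal on v > 0 only at the positive root of
   c v^2 + A v = B; the two choices of (alpha, gamma, c) give the two updates. *)

Lemma ln_le_subr1 (R : realType) (x : R) : 0 < x -> ln x <= x - 1.
Proof. by move=> x0; have := @le_ln1Dx R (x - 1); rewrite addrCA subrr addr0; apply; lra. Qed.

Definition ln_inv_lin (R : realType) (A B c u : R) : R := - A * ln u - B / u - c * u.

(* Concavity of [ln], in the form [ln (u / a) <= u / a - 1], turns maximality
   at [a] into a sign condition that is quadratic in [u]. *)
Lemma ln_inv_lin_max_sign (R : realType) (A B c a u : R) : 0 < a -> 0 <= A ->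
  ln_inv_lin A B c u <= ln_inv_lin A B c a -> 0 < u ->
  (u - a) * (B - u * (A + c * a)) <= 0.
Proof.
rewrite /ln_inv_lin => a0 A0 hmax u0.
have hL : a * (ln u - ln a) <= u - a.
  have := ln_le_subr1 (divr_gt0 u0 a0); rewrite ln_div ?posrE // => hL.
  have -> : u - a = a * (u / a - 1) by field; rewrite gt_eqF.
  by rewrite ler_pM2l.
have hAL : A * u * (a * (ln u - ln a)) <= A * u * (u - a).
  by apply: ler_wpM2l => //; rewrite mulr_ge0 // ltW.
have hua : 0 <= u * a * (A * (ln u - ln a) + B / u - B / a + c * (u - a)).
  by rewrite mulr_ge0 ?mulr_ge0 ?(ltW u0) ?(ltW a0) //; lra.
have expand : u * a * (A * (ln u - ln a) + B / u - B / a + c * (u - a))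
    = A * u * (a * (ln u - ln a)) + B * a - B * u + c * (u - a) * u * a.
  by field; rewrite !gt_eqF.
rewrite expand in hua; nra.
Qed.

Lemma argmax_ln_inv_lin (R : realType) (A B c a : R) :
  0 < a -> 0 <= A -> 0 <= B -> 0 < A + c * a ->
  (forall u, 0 < u -> ln_inv_lin A B c u <= ln_inv_lin A B c a) ->
  B = a * (A + c * a).
Proof.
move=> a0 A0 B0 S0 a_max; set S := A + c * a.
set q := B / S; have q0 : 0 <= q by rewrite divr_ge0 // ltW.
have BE : B = S * q by rewrite /q; field; rewrite gt_eqF.
clearbody q; have mid0 : 0 < (a + q) / 2 by lra.
(* at the midpoint of [a] and [q] the sign condition reads [S (q - a)^2 / 4 <= 0] *)
have := ln_inv_lin_max_sign a0 A0 (a_max _ mid0) mid0; rewrite BE -/S => h.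
suff -> : q = a by rewrite mulrC.
have : S * ((q - a) ^+ 2) <= 0.
  have -> : S * ((q - a) ^+ 2) = 4 * (((a + q) / 2 - a) * (S * q - (a + q) / 2 * S)).
    by field.
  by rewrite pmulr_rle0 //; lra.
rewrite pmulr_rle0 // => sq; apply/eqP; rewrite -subr_eq0 -sqrf_eq0.
by rewrite eq_le sq sqr_ge0.
Qed.

Section GammaPositive.
Local Open Scope classical_set_scope.
Variables (R : realType) (t : R).
Hypothesis t0 : 0 < t.

Let f (x : R) : R := powR x t * expR (- x).

Let measurable_f : measurable_fun setT f.
Proof.
apply: measurable_funM; first exact: measurable_powR.
by apply: measurableT_comp => //; exact: measurable_funN.
Qed.

Let f_ge0 x : 0 <= f x.
Proof. by rewrite /f mulr_ge0 ?powR_ge0 ?expR_ge0. Qed.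

(* [x ^ t e^(-x/2)] is maximal at [x = 2 t], with value [(2 t / e) ^ t]. *)
Lemma powR_expR_le_exponential_pdf x : 0 < x ->
  powR x t * expR (- x) <= expR (t * (ln (2 * t) - 1)) * 2 * exponential_pdf 2^-1 x.
Proof.
move=> x0; rewrite exponential_pdfE; last exact: ltW.
have -> : powR x t = expR (t * ln x) by rewrite /powR gt_eqF.
have -> : expR (t * (ln (2 * t) - 1)) * 2 * (2^-1 * expR (- 2^-1 * x))
   = expR (t * (ln (2 * t) - 1) + - 2^-1 * x) by rewrite expRD; field.
rewrite -expRD ler_expR.
have h : ln (x / (2 * t)) <= x / (2 * t) - 1 by rewrite ln_le_subr1 // divr_gt0 ?mulr_gt0.
rewrite ln_div ?posrE ?mulr_gt0 // lnM ?posrE // in h.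
have h2 : t * (ln x - (ln 2 + ln t)) <= t * (x / (2 * t) - 1) by rewrite ler_pM2l.
have expand : t * (x / (2 * t) - 1) = x / 2 - t by field; rewrite gt_eqF.
rewrite expand in h2; rewrite lnM ?posrE //; lra.
Qed.

Let measurable_EFin_f D : measurable D -> measurable_fun D (EFin \o f).
Proof. by move=> mD; apply/measurable_EFinP; exact: measurable_funTS. Qed.

Lemma Gamma_integral_lt_pinfty :
  (\int[lebesgue_measure]_(x in `]0%R, +oo[) (f x)%:E < +oo)%E.
Proof.
set K := expR (t * (ln (2 * t) - 1)).
have mpdf : measurable_fun setT (EFin \o @exponential_pdf R 2^-1).
  by apply/measurable_EFinP; exact: measurable_exponential_pdf.
apply: (@le_lt_trans _ _ (\int[lebesgue_measure]_(x in `]0%R, +oo[)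
   ((K * 2)%:E * (exponential_pdf 2^-1 x)%:E))%E).
  apply: ge0_le_integral => //.
  - by move=> x _; rewrite lee_fin.
  - exact: measurable_EFin_f.
  - by apply: emeasurable_funM => //; exact: measurable_funTS.
  - move=> x; rewrite /= in_itv /= andbT => x0.
    by rewrite -EFinM lee_fin powR_expR_le_exponential_pdf.
rewrite ge0_integralZl //; last 3 first.
- exact: measurable_funTS.
- by move=> x _; rewrite lee_fin exponential_pdf_ge0.
- by rewrite lee_fin mulr_ge0 ?expR_ge0.
apply: (@le_lt_trans _ _ ((K * 2)%:E * 1)%E); last by rewrite mule1 ltry.
apply: lee_wpmul2l; first by rewrite lee_fin mulr_ge0 ?expR_ge0.
rewrite -(@integral_exponential_pdf R 2^-1) //.
apply: ge0_subset_integral => //.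
by move=> x _; rewrite lee_fin exponential_pdf_ge0.
Qed.

Lemma Gamma_integral_gt0 :
  (0 < \int[lebesgue_measure]_(x in `]0%R, +oo[) (f x)%:E)%E.
Proof.
have unit_itv : (lebesgue_measure (`[1%R, 2%R] : set R) = 1)%E.
  by rewrite lebesgue_measure_itv /= lte_fin ifT -?EFinD; [congr (_%:E)| ]; lra.
apply: (@lt_le_trans _ _ (\int[lebesgue_measure]_(x in `[1%R, 2%R]) (f x)%:E)%E).
  apply: (@lt_le_trans _ _ (\int[lebesgue_measure]_(x in `[1%R, 2%R])
                              (cst (expR (-2))%:E x))%E).
    rewrite integral_cst //.
    apply: (@lt_le_trans _ _ ((expR (-2))%:E * 1)%E).
      by rewrite mule1 lte_fin expR_gt0.
    by apply: lee_wpmul2l; [rewrite lee_fin expR_ge0 | rewrite -unit_itv; exact: lexx].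
  apply: ge0_le_integral => //.
  - by move=> x _; rewrite lee_fin expR_ge0.
  - exact: measurable_EFin_f.
  - move=> x /=; rewrite in_itv /= => /andP[x1 x2]; rewrite lee_fin /f.
    rewrite -[expR (-2)]mul1r; apply: ler_pM; rewrite ?expR_ge0 //.
      by rewrite -(powRr0 x) ler_powR // ltW.
    by rewrite ler_expR; lra.
apply: ge0_subset_integral => //.
- exact: measurable_EFin_f.
- by move=> x _; rewrite lee_fin.
- by move=> x /=; rewrite !in_itv /= andbT => /andP[x1 _]; lra.
Qed.

End GammaPositive.

Lemma Gamma_gt0 (R : realType) (s : R) : 1 < s -> 0 < Gamma s.
Proof.
rewrite -subr_gt0 => s0; rewrite /Gamma.
have := Gamma_integral_lt_pinfty s0; have := Gamma_integral_gt0 s0.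
by case: (\int[_]_(_ in _) _)%E => // r; rewrite !lte_fin.
Qed.

Definition shift_mx (R : pzRingType) (n : nat) : 'M[R]_n :=
  \matrix_(i, j) (i.+1 == j :> nat)%:R.

Lemma det_1_sub_shift (R : comPzRingType) (n : nat) : \det (1%:M - shift_mx R n) = 1.
Proof.
rewrite -det_tr det_trig.
  by rewrite big1 // => i _; rewrite !mxE eqxx (gtn_eqF (ltnSn i)) subr0.
apply/forallP => i; apply/forallP => j; apply/implyP => ij.
rewrite !mxE -val_eqE /= (gtn_eqF ij) (gtn_eqF (ltn_trans ij (ltnSn j))).
by rewrite subrr.
Qed.

Section Kbeta.
Variables (R : realType) (n : nat) (beta : R).

Lemma shift_Kbeta i j : (shift_mx R n *m Kbeta n beta) i j =
  if (i.+1 < n)%N then beta ^+ (maxn i.+1 j).+1 else 0.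
Proof.
rewrite mxE; case: ifP => hi.
  rewrite (bigD1 (Ordinal hi)) //= big1 ?addr0; first by rewrite !mxE eqxx mul1r.
  move=> k /negP hk; rewrite !mxE; case: eqP => [e|]; last by rewrite mul0r.
  by case: hk; apply/eqP/val_inj; rewrite /= e.
rewrite big1 // => k _; rewrite !mxE; case: eqP => [e|]; last by rewrite mul0r.
by move: (ltn_ord k); rewrite -e hi.
Qed.

(* Subtracting from each row of [Kbeta] the next one leaves a lower
   triangular matrix with diagonal [beta^(i+1) (1 - beta)], resp. [beta^n]. *)
Lemma det_Kbeta_gt0 : 0 < beta < 1 -> 0 < \det (Kbeta n beta).
Proof.
case/andP=> b0 b1.
have DK i j : ((1%:M - shift_mx R n) *m Kbeta n beta) i j =
    beta ^+ (maxn i j).+1 - if (i.+1 < n)%N then beta ^+ (maxn i.+1 j).+1 else 0.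
  by rewrite mulmxBl mul1mx !mxE -shift_Kbeta mxE.
rewrite -[\det _]mul1r -(det_1_sub_shift R n) -det_mulmx det_trig.
  apply: prodr_gt0 => i _; rewrite DK maxnn; case: ifP => hi; last by rewrite subr0 exprn_gt0.
  rewrite (maxn_idPl (leqnSn i)) !exprS mulrCA.
  have := mulr_gt0 b0 (exprn_gt0 i b0); set q := beta * beta ^+ i; nra.
apply/forallP => i; apply/forallP => j; apply/implyP => ij.
rewrite DK; case: ifP => hi; last by move: (ltn_ord j) hi ij; lia.
by rewrite (maxn_idPr (ltnW ij)) (maxn_idPr ij) subrr.
Qed.

End Kbeta.

Lemma ln_prod (R : realType) (I : finType) (f : I -> R) : (forall k, 0 < f k) ->
  ln (\prod_k f k) = \sum_k ln (f k).
Proof.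
move=> f_gt0; rewrite -!big_enum /=; elim: (enum I) => [|k s IH].
  by rewrite !big_nil ln1.
by rewrite !big_cons lnM ?IH // posrE // prodr_gt0.
Qed.

Section Blocks.
Variables (R : realType) (p m : nat).
Hypothesis m_gt0 : (0 < m)%N.

Lemma blk_of_idx (i : 'I_p) (j : 'I_m) : blk_of (blk_idx i j) = i.
Proof. by apply: val_inj; rewrite /= divnMDl // divn_small ?addn0. Qed.

Definition blk_pos (k : 'I_(p * m)) : 'I_m := Ordinal (ltn_pmod k m_gt0).

Lemma sum_blk (F : 'I_(p * m) -> R) :
  \sum_k F k = \sum_(i < p) \sum_(j < m) F (blk_idx i j).
Proof.
rewrite (partition_big (@blk_of p m) predT) //=; apply: eq_bigr => i _.
rewrite (reindex_onto (blk_idx i) blk_pos).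
  apply: eq_bigl => j; rewrite blk_of_idx eqxx /=.
  by apply/eqP/val_inj; rewrite /= modnMDl modn_small.
by move=> k /eqP <-; apply: val_inj; rewrite /= -divn_eq.
Qed.

Definition blk_sqnorm (x : 'cV[R]_(p * m)) (i : 'I_p) : R :=
  \sum_(j < m) x (blk_idx i j) 0 ^+ 2.

Variable Ups : 'I_p -> R.
Hypothesis Ups_gt0 : forall i, 0 < Ups i.

Lemma det_Sigmav : \det (Sigmav m Ups) = \prod_k Ups (@blk_of p m k).
Proof. by rewrite det_diag; apply: eq_bigr => k _; rewrite mxE. Qed.

Lemma det_Sigmav_gt0 : 0 < \det (Sigmav m Ups).
Proof. by rewrite det_Sigmav; apply: prodr_gt0 => k _. Qed.

Lemma ln_det_Sigmav : ln (\det (Sigmav m Ups)) = \sum_i m%:R * ln (Ups i).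
Proof.
rewrite det_Sigmav ln_prod // sum_blk; apply: eq_bigr => i _.
by under eq_bigr do rewrite blk_of_idx; rewrite sumr_const card_ord mulr_natl.
Qed.

Lemma invmx_Sigmav : invmx (Sigmav m Ups) = diag_mx (\row_k (Ups (@blk_of p m k))^-1).
Proof.
have Sigma_unit : Sigmav m Ups \in unitmx.
  by rewrite unitmxE unitfE gt_eqF // det_Sigmav_gt0.
have inv_diag : Sigmav m Ups *m diag_mx (\row_k (Ups (@blk_of p m k))^-1) = 1%:M.
  rewrite mulmx_diag -diag_const_mx; congr diag_mx.
  by apply/rowP => k; rewrite !mxE divff // gt_eqF.
by rewrite -[RHS](mulKmx Sigma_unit) inv_diag mulmx1.
Qed.

Lemma quad_Sigmav (x : 'cV[R]_(p * m)) :
  (x^T *m invmx (Sigmav m Ups) *m x) 0 0 = \sum_i blk_sqnorm x i / Ups i.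
Proof.
rewrite invmx_Sigmav mul_mx_diag mxE sum_blk; apply: eq_bigr => i _.
rewrite mulr_suml; apply: eq_bigr => j _.
by rewrite !mxE blk_of_idx; ring.
Qed.

End Blocks.

Section GaussianDensity.
Variables (R : realType) (d : nat) (S : 'M[R]_d).
Hypothesis detS_gt0 : 0 < \det S.

Lemma gauss_pdf_gt0 x : 0 < gauss_pdf S x.
Proof. by rewrite !mulr_gt0 ?powR_gt0 ?expR_gt0 ?mulr_gt0 ?pi_gt0. Qed.

Lemma ln_gauss_pdf x : ln (gauss_pdf S x) = ln (powR (2 * pi) (- (d%:R / 2)))
  - 2^-1 * ln (\det S) - 2^-1 * (x^T *m invmx S *m x) 0 0.
Proof.
have pi2_gt0 : 0 < 2 * pi :> R by rewrite mulr_gt0 ?pi_gt0.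
rewrite /gauss_pdf lnM ?posrE ?mulr_gt0 ?powR_gt0 ?expR_gt0 //.
by rewrite lnM ?posrE ?powR_gt0 // expRK !ln_powR div1r; ring.
Qed.

End GaussianDensity.

Lemma ln_joint_pdf (R : realType) (p m n : nat) (U : 'M[R]_(p * m, n))
    (y : 'cV[R]_(p * m)) (lam beta : R) (Ups : 'I_p -> R) (x : 'cV[R]_n) :
  (0 < m)%N -> (forall i, 0 < Ups i) -> 0 < \det (lam *: Kbeta n beta) ->
  ln (joint_pdf U y lam beta Ups x) =
    ln (powR (2 * pi) (- ((p * m)%:R / 2))) + ln (gauss_pdf (lam *: Kbeta n beta) x)
    + \sum_i - (m%:R * ln (Ups i) + blk_sqnorm (y - U *m x) i / Ups i) / 2.
Proof.
move=> m_gt0 Ups_gt0 detK_gt0; have detS_gt0 := det_Sigmav_gt0 m Ups_gt0.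
rewrite /joint_pdf lnM ?posrE ?gauss_pdf_gt0 // ln_gauss_pdf //.
rewrite ln_det_Sigmav // quad_Sigmav // -mulr_suml sumrN big_split /=; ring.
Qed.

Definition gig_ln_density (R : realType) (prior : R -> R) (alpha gamma c : R) :=
  exists K, forall v, 0 < v -> ln (prior v) = K - alpha * ln v - gamma / v - c * v.

Lemma prior_lap_gig (R : realType) (sigma2 : R) : 0 < sigma2 ->
  gig_ln_density (prior_lap sigma2) 0 0 sigma2^-1.
Proof.
move=> s0; exists (ln sigma2^-1) => v v0.
rewrite /prior_lap lnM ?posrE ?invr_gt0 ?expR_gt0 // expRK.
by field; rewrite !gt_eqF.
Qed.

Lemma prior_t_gig (R : realType) (nu sigma2 : R) : 2 < nu -> 0 < sigma2 ->
  gig_ln_density (prior_t nu sigma2) (nu / 2 + 1) ((nu - 2) * sigma2 / 2) 0.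
Proof.
move=> nu2 s0; set K := powR ((nu - 2) * sigma2 / 2) (nu / 2) / Gamma (nu / 2).
have K_gt0 : 0 < K.
  apply: divr_gt0; last by apply: Gamma_gt0; lra.
  by apply: powR_gt0; rewrite divr_gt0 // mulr_gt0 // subr_gt0.
exists (ln K) => v v0; rewrite /prior_t -/K.
have pv_gt0 : 0 < powR v (- (nu / 2) - 1) by rewrite powR_gt0.
rewrite lnM ?posrE ?expR_gt0 ?(mulr_gt0 K_gt0 pv_gt0) // lnM ?posrE // ln_powR expRK.
by field; rewrite !gt_eqF.
Qed.

Section Expectation.
Local Open Scope classical_set_scope.
Variables (R : realType) (d : measure_display) (T : measurableType d)
  (P : probability T R).

Local Notation Pint f := (P.-integrable setT (EFin \o f)).
Local Notation E f := (Rintegral P setT f).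

Lemma Pint_cst (c : R) : Pint (fun=> c).
Proof. exact: finite_measure_integrable_cst. Qed.

Lemma Pint_eq (f h : T -> R) : f =1 h -> Pint f -> Pint h.
Proof. by move=> fh; apply: eq_integrable => // w _ /=; rewrite fh. Qed.

Lemma PintD (f h : T -> R) : Pint f -> Pint h -> Pint (fun w => f w + h w).
Proof.
move=> hf hh; apply: (eq_integrable _ ((EFin \o f) \+ (EFin \o h))) => //.
exact: integrableD.
Qed.

Lemma PintZ (c : R) (f : T -> R) : Pint f -> Pint (fun w => c * f w).
Proof.
move=> hf; apply: (eq_integrable _ (fun w => (c%:E * (EFin \o f) w)%E)) => //.
exact: integrableZl.
Qed.

Lemma Pint_sum (I : finType) (F : I -> T -> R) :
  (forall i, Pint (F i)) -> Pint (fun w => \sum_i F i w).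
Proof.
move=> hF; apply: (eq_integrable _ (fun w => \sum_i (EFin \o F i) w)%E) => //.
  by move=> w _ /=; rewrite sumEFin.
by apply: integrable_sum => // i _; exact: hF.
Qed.

Lemma EFin_E (f : T -> R) : Pint f -> (\int[P]_w (f w)%:E)%E = (E f)%:E.
Proof. by move=> hf; rewrite /Rintegral fineK // integrable_fin_num. Qed.

Lemma E_cst (c : R) : E (fun=> c) = c.
Proof.
have P1 : fine (P setT) = 1 by move: (probability_setT P) => /= ->.
by rewrite Rintegral_cst // P1 mulr1.
Qed.

Lemma ED (f h : T -> R) : Pint f -> Pint h -> E (fun w => f w + h w) = E f + E h.
Proof. exact: RintegralD. Qed.

Lemma EZ (c : R) (f : T -> R) : Pint f -> E (fun w => c * f w) = c * E f.
Proof. exact: RintegralZl. Qed.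

Lemma E_sum (I : finType) (F : I -> T -> R) :
  (forall i, Pint (F i)) -> E (fun w => \sum_i F i w) = \sum_i E (F i).
Proof.
move=> hF; apply: EFin_inj; rewrite -sumEFin -EFin_E; last exact: Pint_sum.
under eq_integral do rewrite -sumEFin.
by rewrite integral_sum //; apply: eq_bigr => i _; exact: EFin_E.
Qed.

Section Moments.
Variables (n : nat) (g : T -> 'cV[R]_n) (mu : 'cV[R]_n) (Sig : 'M[R]_n).
Hypothesis g_mean_cov : rv_mean_cov P g mu Sig.

Definition centered (l : 'I_n) (w : T) : R := g w l 0 - mu l 0.

Lemma Pint_g l : Pint (fun w => g w l 0).
Proof.
case: g_mean_cov => g_meas [g_sq _].
have dom : Pint (fun w => 1 + g w l 0 ^+ 2) by apply: PintD; [exact: Pint_cst | exact: g_sq].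
apply: (le_integrable _ _ _ dom) => //.
  by apply/measurable_EFinP; exact: g_meas.
move=> w _ /=; rewrite lee_fin (@ger0_norm _ (1 + _)) ?addr_ge0 ?sqr_ge0 //.
set x := g w l 0; have := sqr_ge0 (`|x| - 1).
by rewrite -(real_normK (num_real x)); nra.
Qed.

Lemma Pint_gg l l' : Pint (fun w => g w l 0 * g w l' 0).
Proof.
case: g_mean_cov => g_meas [g_sq _].
have dom : Pint (fun w => g w l 0 ^+ 2 + g w l' 0 ^+ 2) by apply: PintD; exact: g_sq.
apply: (le_integrable _ _ _ dom) => //.
  by apply/measurable_EFinP; exact: measurable_funM.
move=> w _ /=; rewrite lee_fin (@ger0_norm _ (_ + _)) ?addr_ge0 ?sqr_ge0 // normrM.
set x := g w l 0; set z := g w l' 0; have := sqr_ge0 (`|x| - `|z|).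
by rewrite -(real_normK (num_real x)) -(real_normK (num_real z)); nra.
Qed.

Lemma Pint_centered l : Pint (centered l).
Proof.
have gc : Pint (fun w => g w l 0 + - mu l 0) by apply: PintD; [exact: Pint_g | exact: Pint_cst].
exact: Pint_eq gc.
Qed.

Lemma E_centered l : E (centered l) = 0.
Proof.
case: g_mean_cov => _ [_ [g_mean _]].
rewrite /centered RintegralB //; [|exact: Pint_g | exact: Pint_cst].
by rewrite E_cst /Rintegral g_mean subrr.
Qed.

Lemma Pint_centered2 l l' : Pint (fun w => centered l w * centered l' w).
Proof.
apply: (Pint_eq (f := fun w => g w l 0 * g w l' 0 + (- mu l' 0) * g w l 0
   + (- mu l 0) * g w l' 0 + mu l 0 * mu l' 0)); first by move=> w; rewrite /centered; ring.
apply: PintD; last exact: Pint_cst.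
apply: PintD; last by apply: PintZ; exact: Pint_g.
by apply: PintD; [exact: Pint_gg | apply: PintZ; exact: Pint_g].
Qed.

Lemma E_centered2 l l' : E (fun w => centered l w * centered l' w) = Sig l l'.
Proof. by case: g_mean_cov => _ [_ [_ g_cov]]; rewrite /Rintegral /centered g_cov. Qed.

Lemma Pint_quad_form (B : 'M[R]_n) : Pint (fun w => ((g w)^T *m B *m g w) 0 0).
Proof.
apply: (Pint_eq (f := fun w => \sum_a \sum_b B a b * (g w a 0 * g w b 0))).
  move=> w; rewrite mxE exchange_big /=; apply: eq_bigr => b _.
  by rewrite mxE mulr_suml; apply: eq_bigr => a _; rewrite !mxE; ring.
by apply: Pint_sum => a; apply: Pint_sum => b; exact: PintZ (Pint_gg a b).
Qed.

Section AffineSquare.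
Variables (z : R) (a : 'I_n -> R).

Let lin w := \sum_l a l * centered l w.
Let sq_expand w :
  (z + lin w) ^+ 2 = z ^+ 2 + 2 * z * lin w + \sum_l \sum_l' (a l * a l') * (centered l w * centered l' w).
Proof.
suff -> : \sum_l \sum_l' (a l * a l') * (centered l w * centered l' w) = lin w ^+ 2 by ring.
rewrite expr2 mulr_suml; apply: eq_bigr => l _; rewrite mulr_sumr.
by apply: eq_bigr => l' _; ring.
Qed.

Let Pint_lin : Pint lin.
Proof. by apply: Pint_sum => l; exact: PintZ (Pint_centered l). Qed.

Let Pint_double_sum :
  Pint (fun w => \sum_l \sum_l' (a l * a l') * (centered l w * centered l' w)).
Proof.
by apply: Pint_sum => l; apply: Pint_sum => l'; exact: PintZ (Pint_centered2 l l').
Qed.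

Lemma Pint_affine_sq : Pint (fun w => (z + lin w) ^+ 2).
Proof.
apply: Pint_eq (fun w => esym (sq_expand w)) _.
apply: PintD Pint_double_sum; apply: PintD; [exact: Pint_cst | exact: PintZ].
Qed.

Lemma E_affine_sq :
  E (fun w => (z + lin w) ^+ 2) = z ^+ 2 + \sum_l \sum_l' a l * a l' * Sig l l'.
Proof.
under eq_Rintegral do rewrite sq_expand.
have Pint_head : Pint (fun w => z ^+ 2 + 2 * z * lin w).
  by apply: PintD; [exact: Pint_cst | exact: PintZ].
rewrite (ED Pint_head Pint_double_sum) (ED (Pint_cst _) (PintZ _ Pint_lin)).
rewrite E_cst (EZ _ Pint_lin).
rewrite E_sum; last by move=> l; exact: PintZ (Pint_centered l).
rewrite big1 ?mulr0 ?addr0; last by move=> l _; rewrite EZ ?E_centered ?mulr0 // Pint_centered.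
rewrite E_sum; last by move=> l; apply: Pint_sum => l'; exact: PintZ (Pint_centered2 l l').
congr (_ + _); apply: eq_bigr => l _.
rewrite E_sum; last by move=> l'; exact: PintZ (Pint_centered2 l l').
by apply: eq_bigr => l' _; rewrite EZ ?E_centered2 //; exact: Pint_centered2.
Qed.

End AffineSquare.

Section EMObjective.
Variables (p m : nat) (U : 'M[R]_(p * m, n)) (y : 'cV[R]_(p * m)).
Hypothesis m_gt0 : (0 < m)%N.

Definition sqresid (i : 'I_p) (w : T) : R := blk_sqnorm (y - U *m g w) i.

Lemma residual_centered k w :
  (y - U *m g w) k 0 = (y - U *m mu) k 0 + \sum_l (- U k l) * centered l w.
Proof.
suff -> : \sum_l (- U k l) * centered l w =
    \sum_l U k l * mu l 0 - \sum_l U k l * g w l 0 by rewrite !mxE; ring.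
by rewrite -sumrB; apply: eq_bigr => l _; rewrite /centered; ring.
Qed.

Let sqresidE i :
  sqresid i = fun w => \sum_(j < m) ((y - U *m mu) (blk_idx i j) 0
                        + \sum_l (- U (blk_idx i j) l) * centered l w) ^+ 2.
Proof. by apply: funext => w; apply: eq_bigr => j _; rewrite residual_centered. Qed.

Lemma Pint_sqresid i : Pint (sqresid i).
Proof. by rewrite sqresidE; apply: Pint_sum => j; exact: Pint_affine_sq. Qed.

Lemma E_sqresid i : E (sqresid i) =
  blk_sqnorm (y - U *m mu) i + \sum_(j < m) (U *m Sig *m U^T) (blk_idx i j) (blk_idx i j).
Proof.
rewrite sqresidE E_sum; last by move=> j; exact: Pint_affine_sq.
rewrite /blk_sqnorm -big_split /=; apply: eq_bigr => j _; rewrite E_affine_sq /=.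
congr (_ + _); rewrite mxE exchange_big /=; apply: eq_bigr => l' _.
by rewrite mxE mulr_suml; apply: eq_bigr => l _; rewrite !mxE; ring.
Qed.

Lemma E_sqresid_ge0 i : 0 <= E (sqresid i).
Proof. by apply: Rintegral_ge0 => w _; apply: sumr_ge0 => j _; exact: sqr_ge0. Qed.

Definition Ups_objective (prior : R -> R) (i : 'I_p) (v : R) : R :=
  ln (prior v) - (m%:R * ln v + E (sqresid i) / v) / 2.

Lemma EMobj_split (prior : R -> R) (lam beta : R) (Ups : 'I_p -> R) :
  (forall i, 0 < Ups i) -> 0 < \det (lam *: Kbeta n beta) ->
  EMobj P U y g prior lam beta Ups =
  (E (fun w => ln (powR (2 * pi) (- ((p * m)%:R / 2)))
               + ln (gauss_pdf (lam *: Kbeta n beta) (g w)))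
   + \sum_i Ups_objective prior i (Ups i))%:E.
Proof.
move=> Ups_gt0 detK_gt0.
set lam_beta_part := fun w => ln (powR (2 * pi) (- ((p * m)%:R / 2)))
                   + ln (gauss_pdf (lam *: Kbeta n beta) (g w)).
set blk_part := fun i w => ln (prior (Ups i)) - m%:R * ln (Ups i) / 2
                    + (- 2^-1 * (Ups i)^-1) * sqresid i w.
have Pint_lam_beta_part : Pint lam_beta_part.
  apply: PintD; first exact: Pint_cst.
  apply: (Pint_eq (f := fun w => ln (powR (2 * pi) (- (n%:R / 2)))
    - 2^-1 * ln (\det (lam *: Kbeta n beta))
    + (- 2^-1) * ((g w)^T *m invmx (lam *: Kbeta n beta) *m g w) 0 0)).
    by move=> w; rewrite ln_gauss_pdf // mulNr.
  by apply: PintD; [exact: Pint_cst | exact/PintZ/Pint_quad_form].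
have Pint_blk_part i : Pint (blk_part i).
  by apply: PintD; [exact: Pint_cst | exact/PintZ/Pint_sqresid].
rewrite /EMobj (eq_integral (fun w => (lam_beta_part w + \sum_i blk_part i w)%:E)); last first.
  move=> w _; rewrite ln_joint_pdf // -addrA -big_split /=; congr (_ + _)%:E.
  by apply: eq_bigr => i _; rewrite /blk_part /sqresid; ring.
rewrite EFin_E; last by apply: PintD => //; exact: Pint_sum.
rewrite ED //; last exact: Pint_sum.
rewrite E_sum //; congr (_ + _)%:E; apply: eq_bigr => i _.
rewrite /blk_part (ED (Pint_cst _) (PintZ _ (Pint_sqresid i))) E_cst (EZ _ (Pint_sqresid i)).
by rewrite /Ups_objective; ring.
Qed.

Lemma is_argmax_Ups_objective (prior : R -> R) (lam1 beta1 : R) (Ups1 : 'I_p -> R) :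
  is_argmax (EMobj P U y g prior) lam1 beta1 Ups1 ->
  forall i u, 0 < u -> Ups_objective prior i u <= Ups_objective prior i (Ups1 i).
Proof.
case=> [[lam_gt0 [beta01 Ups_gt0]] hmax] i u u_gt0.
have detK_gt0 : 0 < \det (lam1 *: Kbeta n beta1).
  by rewrite detZ mulr_gt0 ?exprn_gt0 // det_Kbeta_gt0.
pose Ups' k := if k == i then u else Ups1 k.
have Ups'_gt0 k : 0 < Ups' k by rewrite /Ups'; case: eqP.
have := hmax lam1 beta1 Ups' (conj lam_gt0 (conj beta01 Ups'_gt0)).
rewrite !EMobj_split // lee_fin lerD2l (bigD1 i) //= [leRHS](bigD1 i) //= /Ups' eqxx.
rewrite (eq_bigr (fun k => Ups_objective prior k (Ups1 k))); last first.
  by move=> k /negbTE ki; rewrite /Ups' ki.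
by rewrite lerD2r.
Qed.

Lemma is_argmax_Ups_stationary (prior : R -> R) (alpha gamma c : R) (lam1 beta1 : R)
    (Ups1 : 'I_p -> R) (i : 'I_p) :
  0 <= alpha -> 0 <= gamma -> 0 <= c -> gig_ln_density prior alpha gamma c ->
  is_argmax (EMobj P U y g prior) lam1 beta1 Ups1 ->
  E (sqresid i) / 2 + gamma = Ups1 i * (m%:R / 2 + alpha + c * Ups1 i).
Proof.
move=> alpha_ge0 gamma_ge0 c_ge0 [K lnK] hmax.
have Ups_gt0 : 0 < Ups1 i by case: hmax => [[_ [_ Ups_gt0]] _].
have A_ge0 : 0 <= m%:R / 2 + alpha by rewrite addr_ge0 ?divr_ge0.
have objE v : 0 < v -> Ups_objective prior i v =
    K + ln_inv_lin (m%:R / 2 + alpha) (E (sqresid i) / 2 + gamma) c v.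
  by move=> v0; rewrite /Ups_objective lnK // /ln_inv_lin; field; rewrite gt_eqF.
apply: argmax_ln_inv_lin => //.
- by rewrite addr_ge0 ?divr_ge0 ?E_sqresid_ge0.
- rewrite -addrA ltr_pwDl ?divr_gt0 ?ltr0n //.
  by rewrite addr_ge0 // mulr_ge0 // ltW.
move=> u u_gt0; rewrite -(lerD2l K) -!objE //.
exact: (is_argmax_Ups_objective hmax).
Qed.

End EMObjective.

End Moments.

End Expectation.

Lemma pos_root_quadratic (R : rcfType) (k s z a : R) : 0 < k -> 0 < s -> 0 < a ->
  z / 2 = a * (k / 2 + s^-1 * a) ->
  a = k * s / 4 * (Num.sqrt (1 + 8 * z / (k ^+ 2 * s)) - 1).
Proof.
move=> k0 s0 a0 za.
have -> : 1 + 8 * z / (k ^+ 2 * s) = (1 + 4 * a / (k * s)) ^+ 2.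
  have -> : z = 2 * (a * (k / 2 + s^-1 * a)) by rewrite -za; field.
  by field; rewrite !gt_eqF.
rewrite sqrtr_sqr ger0_norm; last by rewrite addr_ge0 // divr_ge0 ?mulr_ge0 // ltW.
by field; rewrite !gt_eqF.
Qed.

Theorem proposition1 (R : realType) (p m n : nat) (hp : (0 < p)%N) (hm : (0 < m)%N)
    (U : 'M[R]_(p * m, n)) (y : 'cV[R]_(p * m)) (sigma2 nu : R)
    (hsigma2 : 0 < sigma2)
    (lamk betak : R) (Upsk : 'I_p -> R) (hk : admissible lamk betak Upsk)
    (d : measure_display) (T : measurableType d) (P : probability T R)
    (g : T -> 'cV[R]_n)
    (hg : rv_mean_cov P g (Cmat U lamk betak Upsk *m y) (Pmat U lamk betak Upsk))
    (lam1 beta1 : R) (Ups1 : 'I_p -> R) :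
  (is_argmax (EMobj P U y g (prior_lap sigma2)) lam1 beta1 Ups1 ->
     forall i : 'I_p,
       Ups1 i = m%:R * sigma2 / 4
                * (Num.sqrt (1 + 8 * zeta U y lamk betak Upsk i
                                 / (m%:R ^+ 2 * sigma2)) - 1)) /\
  (2 < nu ->
   is_argmax (EMobj P U y g (prior_t nu sigma2)) lam1 beta1 Ups1 ->
     forall i : 'I_p,
       Ups1 i = (zeta U y lamk betak Upsk i + (nu - 2) * sigma2)
                / (nu + 2 + m%:R)).
Proof.
have zetaE i : Rintegral P setT (sqresid g U y i) = zeta U y lamk betak Upsk i.
  rewrite (E_sqresid hg) /zeta /blk_sqnorm; congr (_ + _).
  by apply: eq_bigr => j _; rewrite mulmxA !mxE.
have m_gt0 : 0 < m%:R :> R by rewrite ltr0n.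
split => [hmax i | nu2 hmax i].
  have Ups1_gt0 : 0 < Ups1 i by case: hmax => [[_ [_ Ups_gt0]] _].
  have c_ge0 : 0 <= sigma2^-1 by rewrite invr_ge0 ltW.
  have := is_argmax_Ups_stationary hg hm i (lexx 0) (lexx 0) c_ge0 (prior_lap_gig hsigma2) hmax.
  rewrite zetaE !addr0 => stationary.
  exact: pos_root_quadratic Ups1_gt0 stationary.
have alpha_ge0 : 0 <= nu / 2 + 1 by lra.
have gamma_ge0 : 0 <= (nu - 2) * sigma2 / 2 by apply: divr_ge0 => //; apply: mulr_ge0; lra.
have := is_argmax_Ups_stationary hg hm i alpha_ge0 gamma_ge0 (lexx 0) (prior_t_gig nu2 hsigma2) hmax.
rewrite zetaE mul0r addr0 => stationary.
have nz : nu + 2 + m%:R != 0 by rewrite gt_eqF //; lra.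
apply: (mulIf nz); rewrite mulfVK //.
have -> : zeta U y lamk betak Upsk i + (nu - 2) * sigma2 =
    2 * (zeta U y lamk betak Upsk i / 2 + (nu - 2) * sigma2 / 2) by field.
by rewrite stationary; field.
Qed.
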